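(* Let $\alpha>-1$ with $\alpha\neq-\tfrac12$, $M\ge0$, and for $n=0,1,2,\ldots$ let $$P_n^{\alpha,\alpha,M,M}(x)=C_0P_n^{(\alpha,\alpha)}(x)-C_1x\frac{d}{dx}P_n^{(\alpha,\alpha)}(x),$$ where $$C_0=1+M\frac{2n}{\alpha+1}\binom{n+2\alpha+1}{n}+4M^2\binom{n+2\alpha+1}{n-1}^2,\qquad C_1=\frac{2M}{2\alpha+1}\binom{n+2\alpha}{n}+\frac{2M^2}{\alpha+1}\binom{n+2\alpha}{n-1}\binom{n+2\alpha+1}{n}.$$ Then $y=P_n^{\alpha,\alpha,M,M}$ satisfies the linear infinite order differential equation $$\sum_{i=0}^\infty b_i(x)y^{(i)}(x)=0,$$ where $b_0(x)=b_0(n,\alpha,x)=\tfrac12\big[1-(-1)^n\big]$ and $b_i(x)=\frac{2^{i-1}}{i!}(-x)^i$ for $i=1,2,3,\ldots$.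
   Context: $P_n^{(\alpha,\alpha)}(x)=\binom{n+\alpha}{n}\,{}_2F_1\!\left(\begin{matrix}-n,\;n+2\alpha+1\\ \alpha+1\end{matrix};\frac{1-x}{2}\right)$ is the classical symmetric Jacobi polynomial; $\binom{\gamma}{m}$ is the generalized binomial coefficient (zero for $m<0$). $P_n^{\alpha,\alpha,M,M}$ are Koornwinder's generalized Jacobi polynomials orthogonal on $[-1,1]$ with respect to $\frac{\Gamma(2\alpha+2)}{2^{2\alpha+1}\Gamma(\alpha+1)^2}(1-x^2)^\alpha+M\delta(x+1)+M\delta(x-1)$. The sum is finite on polynomials. *)

From HB Require Import structures.
From mathcomp Require Import all_boot all_order all_algebra.
From mathcomp Require Import all_classical all_reals.
Set Implicit Arguments. Unset Strict Implicit. Unset Printing Implicit Defensive.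
Import Order.TTheory GRing.Theory Num.Theory.
Local Open Scope ring_scope.

Definition poch {R : realType} (a : R) (k : nat) : R :=
  \prod_(i < k) (a + i%:R).

Definition gbinom {R : realType} (g : R) (m : int) : R :=
  match m with
  | Posz k => (\prod_(i < k) (g - i%:R)) / (k`!)%:R
  | Negz _ => 0
  end.

(* Symmetric Jacobi polynomial
   P_n^{(a,a)}(x) = binom(n+a,n) 2F1(-n, n+2a+1; a+1; (1-x)/2),
   the terminating hypergeometric series written as a finite sum (k <= n;
   the terms with k > n vanish since (-n)_k = 0). *)
Definition jacobiP {R : realType} (a : R) (n : nat) : {poly R} :=
  gbinom (n%:R + a) n *:
  \sum_(k < n.+1)
    ((poch (- n%:R) k * poch (n%:R + 2 * a + 1) k)
       / (poch (a + 1) k * (k`!)%:R))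
    *: ((2^-1)%:P * (1 - 'X)) ^+ k.

Definition koornC0 {R : realType} (a M : R) (n : nat) : R :=
  1 + M * (2 * n%:R / (a + 1)) * gbinom (n%:R + 2 * a + 1) n
    + 4 * M ^+ 2 * (gbinom (n%:R + 2 * a + 1) (n%:Z - 1)) ^+ 2.

Definition koornC1 {R : realType} (a M : R) (n : nat) : R :=
  2 * M / (2 * a + 1) * gbinom (n%:R + 2 * a) n
  + 2 * M ^+ 2 / (a + 1) * gbinom (n%:R + 2 * a) (n%:Z - 1)
      * gbinom (n%:R + 2 * a + 1) n.

Definition koornwinderP {R : realType} (a M : R) (n : nat) : {poly R} :=
  koornC0 a M n *: jacobiP a n - koornC1 a M n *: ('X * (jacobiP a n)^`()).

Definition bcoef {R : realType} (n i : nat) (x : R) : R :=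
  if i == 0%N then (1 - (-1) ^+ n) / 2
  else (2 ^+ i.-1) / (i`!)%:R * (- x) ^+ i.

From HB Require Import structures.
From mathcomp Require Import all_boot all_order all_algebra.
From mathcomp Require Import all_classical all_reals.
From mathcomp Require Import ring lra.

Set Implicit Arguments.
Unset Strict Implicit.
Unset Printing Implicit Defensive.
Import Order.TTheory GRing.Theory Num.Theory.
Local Open Scope ring_scope.

(* Taylor's formula at x with step -2x gives
   y(-x) = sum_i y^(i)(x) (-2x)^i / i!, and b_i(x) y^(i)(x) is half the i-th
   term of this sum for i >= 1, so the equation reduces to
   b_0 y(x) + (y(-x) - y(x)) / 2 = 0, i.e. to y(-x) = (-1)^n y(x).
   Since x d/dx preserves parity, it suffices that P_n^(a,a) has the parity
   of n.  Write P_n^(a,a)(x) = c F((1-x)/2) with F = 2F1(-n, n+2a+1; a+1; t).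
   The hypergeometric equation of F is invariant under t -> 1-t because
   a+1 is half of (-n) + (n+2a+1) + 1, and its only polynomial solution of
   degree < n is 0; as F(1-t) and (-1)^n F(t) share their leading
   coefficient, they are equal. *)

Lemma pochS (R : realType) (x : R) k : poch x k.+1 = poch x k * (x + k%:R).
Proof. by rewrite /poch big_ord_recr. Qed.

Lemma poch_gt0 (R : realType) (x : R) k : 0 < x -> 0 < poch x k.
Proof.
move=> x_gt0; apply: prodr_gt0 => i _.
by apply: (lt_le_trans x_gt0); rewrite lerDl ler0n.
Qed.

Lemma poch_oppn_eq0 (R : realType) (n m : nat) :
  (n < m)%N -> poch (- n%:R : R) m = 0.
Proof.
elim: m => // m IHm; rewrite ltnS leq_eqVlt => /orP[/eqP<-|/IHm poch0].
  by rewrite pochS addNr mulr0.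
by rewrite pochS poch0 mul0r.
Qed.

Section ParityComp.
Variable R : comNzRingType.

Lemma deriv_comp_oppX (p : {poly R}) (s : R) :
  p \Po (- 'X) = s *: p -> p^`() \Po (- 'X) = - s *: p^`().
Proof.
move=> p_par; have := congr1 deriv p_par.
rewrite derivZ deriv_comp derivN derivX mulrN1 => /(congr1 -%R).
by rewrite opprK scaleNr.
Qed.

Lemma mulX_deriv_comp_oppX (p : {poly R}) (s : R) :
  p \Po (- 'X) = s *: p -> ('X * p^`()) \Po (- 'X) = s *: ('X * p^`()).
Proof.
move=> /deriv_comp_oppX dp_par.
by rewrite comp_polyM comp_polyX dp_par scaleNr mulrN mulNr opprK scalerAr.
Qed.

End ParityComp.

Section JacobiParity.
Variables (R : realType) (a : R) (n : nat).
Hypothesis a_gtN1 : -1 < a.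

Let a1_gt0 : 0 < a + 1.
Proof. by move: a_gtN1; rewrite -subr_gt0 opprK addrC. Qed.

Definition hyp_coef (k : nat) : R :=
  poch (- n%:R) k * poch (n%:R + 2 * a + 1) k / (poch (a + 1) k * (k`!)%:R).

Definition hyp_poly : {poly R} := \poly_(k < n.+1) hyp_coef k.

(* The hypergeometric operator t(1-t) D^2 + (c - (A+B+1) t) D - A B
   for A = -n, B = n+2a+1, c = a+1. *)
Definition hyp_op (p : {poly R}) : {poly R} :=
  'X * p^`()^`() - 'X^2 * p^`()^`() + (a + 1) *: p^`()
  - (2 * (a + 1)) *: ('X * p^`()) + (n%:R * (n%:R + 2 * a + 1)) *: p.

Lemma coef_hyp_poly k : hyp_poly`_k = hyp_coef k.
Proof.
rewrite coef_poly; case: ltnP => // n_lt_k.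
by rewrite /hyp_coef poch_oppn_eq0 ?mul0r.
Qed.

Lemma coef_hyp_op p k : (hyp_op p)`_k =
  k.+1%:R * (k%:R + (a + 1)) * p`_k.+1
  + (n%:R - k%:R) * (n%:R + k%:R + 2 * a + 1) * p`_k.
Proof.
rewrite /hyp_op !(coefD, coefN, coefZ) coefXnM !coefXM !coef_deriv.
case: k => [|[|k]] /=.
- move: (p`_0) (p`_1) => u v; ring.
- move: (p`_1) (p`_2) => u v; ring.
- rewrite !subSS subn0; move: (p`_k.+2) (p`_k.+3) => u v; ring.
Qed.

Lemma hyp_op_hyp_poly : hyp_op hyp_poly = 0.
Proof.
apply/polyP => k; rewrite coef_hyp_op !coef_hyp_poly coef0 /hyp_coef.
rewrite !pochS factS natrM -natr1.
have poch_neq0 : poch (a + 1) k != 0 by rewrite gt_eqF // poch_gt0.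
have ak_neq0 : a + 1 + k%:R != 0 by rewrite gt_eqF // ltr_wpDr.
have fact_neq0 : (k`!)%:R != 0 :> R by rewrite pnatr_eq0 -lt0n fact_gt0.
have k1_neq0 : k%:R + 1 != 0 :> R by rewrite natr1 pnatr_eq0.
by field; rewrite poch_neq0 ak_neq0 fact_neq0 k1_neq0.
Qed.

Lemma hyp_coef_n_neq0 : hyp_coef n != 0.
Proof.
rewrite /hyp_coef mulf_neq0 ?invr_eq0 ?mulf_neq0 //.
- by apply/prodf_neq0 => i _; rewrite addrC subr_eq0 eqr_nat neq_ltn ltn_ord.
- apply/prodf_neq0 => i _; apply/lt0r_neq0.
  have : 1 <= n%:R :> R by rewrite (ler_nat R 1) (leq_ltn_trans _ (ltn_ord i)).
  have : 0 <= i%:R :> R by rewrite ler0n.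
  move: a_gtN1; lra.
- by rewrite gt_eqF // poch_gt0.
- by rewrite pnatr_eq0 -lt0n fact_gt0.
Qed.

Lemma size_hyp_poly : size hyp_poly = n.+1.
Proof. by rewrite size_poly_eq // hyp_coef_n_neq0. Qed.

Lemma hyp_opB p q s : hyp_op (p - s *: q) = hyp_op p - s *: hyp_op q.
Proof. by rewrite /hyp_op !(derivB, derivZ) -!mul_polyC; ring. Qed.

Lemma hyp_op_comp_1subX p : hyp_op (p \Po (1 - 'X)) = hyp_op p \Po (1 - 'X).
Proof.
have d1X : (1 - 'X : {poly R})^`() = -1 by rewrite derivB derivC derivX sub0r.
rewrite /hyp_op !deriv_comp d1X !mulrN1 !derivN deriv_comp d1X mulrN1 opprK.
rewrite !(comp_polyB, comp_polyD, comp_polyM, comp_polyZ, comp_polyX).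
by rewrite -!mul_polyC; ring.
Qed.

(* At degree k < n the coefficient (n-k)(n+k+2a+1) of hyp_op is nonzero. *)
Lemma hyp_op_eq0 p : hyp_op p = 0 -> (size p <= n)%N -> p = 0.
Proof.
move=> p_sol p_size; apply/eqP/negPn/negP => p_neq0.
have p_sizeE : size p = (size p).-1.+1 by rewrite prednK // lt0n size_poly_eq0.
have lt_deg_n : ((size p).-1 < n)%N by rewrite -p_sizeE.
have := congr1 (fun q : {poly R} => q`_(size p).-1) p_sol.
rewrite /= coef_hyp_op coef0 nth_default -?p_sizeE // mulr0 add0r.
apply/eqP; rewrite !mulf_neq0 //.
- by rewrite subr_eq0 eqr_nat eq_sym neq_ltn lt_deg_n.
- apply/lt0r_neq0.
  have : 1 <= n%:R :> R by rewrite (ler_nat R 1) (leq_ltn_trans _ lt_deg_n).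
  have : 0 <= ((size p).-1)%:R :> R by rewrite ler0n.
  move: a_gtN1; lra.
- by rewrite -lead_coefE lead_coef_eq0.
Qed.

Lemma hyp_poly_comp_1subX : hyp_poly \Po (1 - 'X) = (-1) ^+ n *: hyp_poly.
Proof.
have size_1subX : size (1 - 'X : {poly R}) = 2.
  by rewrite -opprB size_polyN size_XsubC.
have lead_1subX : lead_coef (1 - 'X : {poly R}) = -1.
  by rewrite -opprB lead_coefN lead_coefXsubC.
have size_comp : size (hyp_poly \Po (1 - 'X)) = n.+1.
  by rewrite size_comp_poly2 // size_hyp_poly.
apply/eqP; rewrite -subr_eq0; apply/eqP/hyp_op_eq0.
  by rewrite hyp_opB hyp_op_comp_1subX hyp_op_hyp_poly linear0 scaler0 subr0.
apply/leq_sizeP => j; rewrite leq_eqVlt => /orP[/eqP<-|lt_n_j].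
  have := @lead_coef_comp _ hyp_poly (1 - 'X); rewrite size_1subX lead_1subX.
  rewrite !lead_coefE size_comp size_hyp_poly => /(_ isT) lead_comp.
  by rewrite coefB coefZ lead_comp mulrC subrr.
by rewrite coefB coefZ !nth_default ?mulr0 ?subr0 ?size_comp ?size_hyp_poly.
Qed.

Lemma jacobiP_hyp_poly :
  jacobiP a n = gbinom (n%:R + a) n *: (hyp_poly \Po ((2^-1)%:P * (1 - 'X))).
Proof.
rewrite /jacobiP comp_polyE size_hyp_poly; congr (_ *: _).
by apply: eq_bigr => i _; rewrite coef_hyp_poly.
Qed.

Lemma jacobiP_comp_oppX : jacobiP a n \Po (- 'X) = (-1) ^+ n *: jacobiP a n.
Proof.
have t_reflect : ((2^-1)%:P * (1 - 'X)) \Po (- 'X)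
    = (1 - 'X) \Po ((2^-1)%:P * (1 - 'X) : {poly R}).
  rewrite comp_polyM !comp_polyB !comp_polyX -polyC1 !comp_polyC.
  apply/eqP; rewrite -subr_eq0; apply/eqP.
  transitivity ((2^-1 + 2^-1 - 1)%:P : {poly R}).
    by rewrite polyCB polyCD polyC1; ring.
  by rewrite (_ : 2^-1 + 2^-1 = 1 :> R) ?subrr //; field.
rewrite jacobiP_hyp_poly comp_polyZ -comp_polyA t_reflect comp_polyA.
by rewrite hyp_poly_comp_1subX !comp_polyZ !scalerA mulrC.
Qed.

End JacobiParity.

Lemma koornwinderP_comp_oppX (R : realType) (a M : R) n : -1 < a ->
  koornwinderP a M n \Po (- 'X) = (-1) ^+ n *: koornwinderP a M n.
Proof.
move=> a_gtN1; have J_par := jacobiP_comp_oppX n a_gtN1.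
rewrite /koornwinderP comp_polyB.
rewrite (comp_polyZ (koornC0 a M n)) (comp_polyZ (koornC1 a M n)).
rewrite J_par (mulX_deriv_comp_oppX J_par).
by rewrite scalerBr !scalerA (mulrC (koornC0 a M n)) (mulrC (koornC1 a M n)).
Qed.

Lemma bcoef_derivn (R : realType) (y : {poly R}) n i x : (0 < i)%N ->
  bcoef n i x * (y^`(i)).[x] = 2^-1 * ((y^`N(i)).[x] * (- (2 * x)) ^+ i).
Proof.
case: i => // i _; rewrite /bcoef nderivn_def hornerMn /=.
rewrite -(mulr_natr (y^`N(i.+1)).[x]).
have fact_neq0 : ((i.+1)`!)%:R != 0 :> R by rewrite pnatr_eq0 -lt0n fact_gt0.
rewrite -mulrN exprMn (exprS 2).
move: fact_neq0 ((y^`N(i.+1)).[x]) ((- x) ^+ i.+1) => fact_neq0 Y X.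
by field.
Qed.

Lemma parity_infinite_order_ode (R : realType) (y : {poly R}) n x N :
  y \Po (- 'X) = (-1) ^+ n *: y -> (size y <= N)%N ->
  \sum_(i < N) bcoef n i x * (y^`(i)).[x] = 0.
Proof.
move=> y_par y_size.
have taylor := nderiv_taylor_wide (@mulrC _ x (- (2 * x))) y_size.
have y_reflect : y.[x + - (2 * x)] = (-1) ^+ n * y.[x].
  rewrite -hornerZ -y_par horner_comp hornerN hornerX; congr y.[_]; ring.
case: N y_size taylor => [|N] _ taylor; first by rewrite big_ord0.
rewrite big_ord_recl in taylor; rewrite big_ord_recl.
rewrite (eq_bigr _ (fun i : 'I_N => fun _ => bcoef_derivn y n x (ltn0Sn i))).
rewrite -mulr_sumr.
move: taylor; rewrite y_reflect /= nderivn0 expr0 mulr1 => taylor.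
rewrite (_ : \sum_(i < N) _ = (-1) ^+ n * y.[x] - y.[x]); last first.
  by rewrite taylor addrAC subrr add0r.
by rewrite /bcoef /=; ring.
Qed.

Theorem mainTheorem5 (R : realType) (a M : R) (n : nat) :
  -1 < a -> a != - (2^-1) -> 0 <= M ->
  forall (x : R) (N : nat), (size (koornwinderP a M n) <= N)%N ->
    \sum_(i < N) bcoef n i x * ((koornwinderP a M n)^`(i)).[x] = 0.
Proof.
move=> a_gtN1 _ _ x N size_le.
exact: parity_infinite_order_ode (koornwinderP_comp_oppX M n a_gtN1) size_le.
Qed.
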